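(* An ES combination operator $\nabla$ satisfies (ESF1)–(ESF7) and (ESF8W) if and only if there exists a unique quasifaithful assignment $\Phi\mapsto\succeq_\Phi$ such that $[\![B(\nabla(\Phi,E))]\!]=\max([\![B(E)]\!],\succeq_\Phi)$ for every profile $\Phi$ and every $E\in\mathcal E$.
   Context: Setting: an epistemic space $(\mathcal E,B,\mathcal L_{\mathcal P})$ ($\mathcal E$ nonempty, $B:\mathcal E\to\mathcal L_{\mathcal P}$ with image modulo equivalence exactly the consistent formulas over the finite variable set $\mathcal P$; $\mathcal W_{\mathcal P}$ valuations, $[\![\phi]\!]$ models); agents form a well-ordered set $\mathcal S$; a society is a nonempty finite $N\subseteq\mathcal S$; an $N$-profile is $\Phi:N\to\mathcal E$, $E_i=\Phi(i)$, identified with $E_i$ when $N=\{i\}$; profiles on $\{i_1<\dots<i_n\}$ and $\{j_1<\dots<j_m\}$ are equivalent ($\equiv$) if $n=m$ and entries coincide position-wise; $\Phi\upharpoonright_M$ restriction; partitions $\{N_1,N_2\}$ have nonempty disjoint parts. An ES combination operator maps (profile, $E$) to $\nabla(\Phi,E)\in\mathcal E$. Postulates: (ESF1) $B(\nabla(\Phi,E))\vdash B(E)$; (ESF2) if $\Phi\equiv\Phi'$ and $B(E)\equiv B(E')$ then $B(\nabla(\Phi,E))\equiv B(\nabla(\Phi',E'))$; (ESF3) if $B(E)\equiv B(E')\wedge B(E'')$ then $B(\nabla(\Phi,E'))\wedge B(E'')\vdash B(\nabla(\Phi,E))$; (ESF4) if moreover $B(\nabla(\Phi,E'))\wedge B(E'')\nvdash\bot$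 then $B(\nabla(\Phi,E))\vdash B(\nabla(\Phi,E'))\wedge B(E'')$; (ESF5) if $E_j\ne E_k$ there is $E'$ with $B(\nabla(E_j,E'))\not\equiv B(\nabla(E_k,E'))$; (ESF6) if $\bigwedge_{i\in N}B(E_i)\wedge B(E)\nvdash\bot$ then $B(\nabla(\Phi,E))\equiv\bigwedge_{i\in N}B(E_i)\wedge B(E)$; (ESF7) $B(\nabla(\Phi\upharpoonright_{N_1},E))\wedge B(\nabla(\Phi\upharpoonright_{N_2},E))\vdash B(\nabla(\Phi,E))$; (ESF8W) if $B(\nabla(\Phi\upharpoonright_{N_1},E))\wedge B(\nabla(\Phi\upharpoonright_{N_2},E))\nvdash\bot$ then $B(\nabla(\Phi,E))\vdash B(\nabla(\Phi\upharpoonright_{N_1},E))\vee B(\nabla(\Phi\upharpoonright_{N_2},E))$. An assignment maps each profile to a total preorder $\succeq_\Phi$ on $\mathcal W_{\mathcal P}$; it is basic if $\Phi\equiv\Psi$ implies $\succeq_\Phi=\succeq_\Psi$; it is quasifaithful if basic and: (1) $E_j\ne E_k$ implies $\succeq_{E_j}\ne\succeq_{E_k}$; (2) if $\bigwedge_{i\in N}B(E_i)\nvdash\bot$ then $[\![\bigwedge_{i\in N}B(E_i)]\!]=\max(\succeq_\Phi)$; (3) $w\succeq_{\Phi\upharpoonright_{N_1}}w'$ and $w\succeq_{\Phi\upharpoonright_{N_2}}w'$ imply $w\succeq_\Phi w'$; (4') $w\succ_{\Phi\upharpoonright_{N_1}}w'$ and $w\succ_{\Phi\upharpoonright_{N_2}}w'$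 imply $w\succ_\Phi w'$. $\max(C,\succeq)=\{c\in C:c\succeq x\ \forall x\in C\}$. *)

From mathcomp Require Import all_boot.
Set Implicit Arguments. Unset Strict Implicit. Unset Printing Implicit Defensive.

Inductive form (P : Type) : Type :=
| FVar of P
| FTop
| FBot
| FNeg of form P
| FAnd of form P & form P
| FOr of form P & form P.
Arguments FTop {P}. Arguments FBot {P}.

Definition valuation (P : finType) := {ffun P -> bool}.

Fixpoint sat (P : finType) (w : valuation P) (f : form P) : bool :=
  match f with
  | FVar p => w p
  | FTop => true
  | FBot => false
  | FNeg g => ~~ sat w g
  | FAnd g h => sat w g && sat w h
  | FOr g h => sat w g || sat w h
  end.

Definition models (P : finType) (f : form P) : {set valuation P} :=
  [set w | sat w f].

Definition entails (P : finType) (f g : form P) : Prop := models f \subset models g.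
Definition fequiv (P : finType) (f g : form P) : Prop := models f = models g.
Definition consistent (P : finType) (f : form P) : Prop := models f != set0.

Definition maxset (T : finType) (C : {set T}) (r : rel T) : {set T} :=
  [set c in C | [forall x in C, r c x]].

Definition strict (T : Type) (r : rel T) : rel T := fun x y => r x y && ~~ r y x.

Section Space.
Variables (P : finType) (S : Type) (lt : rel S) (E : Type) (B : E -> form P).

Definition epistemic_space : Prop :=
  inhabited E /\ (forall e, consistent (B e)) /\
  (forall f : form P, consistent f -> exists e, fequiv (B e) f).

Definition well_order : Prop :=
  irreflexive lt /\ transitive lt /\ (forall x y : S, x <> y -> lt x y || lt y x) /\
  well_founded (fun x y => lt x y).

(* A profile Phi : N -> E on a nonempty finite society N is represented
   canonically as the list of pairs (i, E_i), i ranging over N in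
   increasing order. *)
Definition profile := seq (S * E).
Definition is_profile (Phi : profile) : Prop :=
  sorted (fun a b => lt a.1 b.1) Phi /\ ~~ nilp Phi.

Definition prof_equiv (Phi Psi : profile) : Prop := map snd Phi = map snd Psi.

Definition single (i : S) (e : E) : profile := [:: (i, e)].

(* A partition {N1, N2} of the society of Phi is described by a mask m:
   N1 = mask m Phi, N2 = mask (~~ m) Phi, both nonempty. *)
Definition is_partition (Phi : profile) (m : bitseq) : Prop :=
  size m = size Phi /\ 0 < size (mask m Phi) /\ 0 < size (mask (map negb m) Phi).
Definition part1 (Phi : profile) (m : bitseq) : profile := mask m Phi.
Definition part2 (Phi : profile) (m : bitseq) : profile := mask (map negb m) Phi.

Definition bigB (Phi : profile) : form P := foldr (fun p acc => FAnd (B p.2) acc) FTop Phi.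

Variable nab : profile -> E -> E.

Definition ESF1 := forall Phi e, is_profile Phi -> entails (B (nab Phi e)) (B e).
Definition ESF2 := forall Phi Phi' e e', is_profile Phi -> is_profile Phi' ->
  prof_equiv Phi Phi' -> fequiv (B e) (B e') -> fequiv (B (nab Phi e)) (B (nab Phi' e')).
Definition ESF3 := forall Phi e e' e'', is_profile Phi ->
  fequiv (B e) (FAnd (B e') (B e'')) ->
  entails (FAnd (B (nab Phi e')) (B e'')) (B (nab Phi e)).
Definition ESF4 := forall Phi e e' e'', is_profile Phi ->
  fequiv (B e) (FAnd (B e') (B e'')) ->
  consistent (FAnd (B (nab Phi e')) (B e'')) ->
  entails (B (nab Phi e)) (FAnd (B (nab Phi e')) (B e'')).
Definition ESF5 := forall (j k : S) (ej ek : E), ej <> ek ->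
  exists e', ~ fequiv (B (nab (single j ej) e')) (B (nab (single k ek) e')).
Definition ESF6 := forall Phi e, is_profile Phi ->
  consistent (FAnd (bigB Phi) (B e)) -> fequiv (B (nab Phi e)) (FAnd (bigB Phi) (B e)).
Definition ESF7 := forall Phi e m, is_profile Phi -> is_partition Phi m ->
  entails (FAnd (B (nab (part1 Phi m) e)) (B (nab (part2 Phi m) e))) (B (nab Phi e)).
Definition ESF8W := forall Phi e m, is_profile Phi -> is_partition Phi m ->
  consistent (FAnd (B (nab (part1 Phi m) e)) (B (nab (part2 Phi m) e))) ->
  entails (B (nab Phi e)) (FOr (B (nab (part1 Phi m) e)) (B (nab (part2 Phi m) e))).

Definition ESF_all : Prop :=
  ESF1 /\ ESF2 /\ ESF3 /\ ESF4 /\ ESF5 /\ ESF6 /\ ESF7 /\ ESF8W.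

Definition assignment := profile -> rel (valuation P).

Definition is_assignment (a : assignment) : Prop :=
  forall Phi, is_profile Phi -> total (a Phi) /\ transitive (a Phi).

Definition basic (a : assignment) : Prop :=
  is_assignment a /\
  forall Phi Psi, is_profile Phi -> is_profile Psi -> prof_equiv Phi Psi -> a Phi =2 a Psi.

Definition quasifaithful (a : assignment) : Prop :=
  basic a /\
  (forall (j k : S) (ej ek : E), ej <> ek -> ~ (a (single j ej) =2 a (single k ek))) /\
  (forall Phi, is_profile Phi -> consistent (bigB Phi) ->
     models (bigB Phi) = maxset [set: valuation P] (a Phi)) /\
  (forall Phi m w w', is_profile Phi -> is_partition Phi m ->
     a (part1 Phi m) w w' -> a (part2 Phi m) w w' -> a Phi w w') /\
  (forall Phi m w w', is_profile Phi -> is_partition Phi m ->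
     strict (a (part1 Phi m)) w w' -> strict (a (part2 Phi m)) w w' ->
     strict (a Phi) w w').

Definition represents (a : assignment) : Prop :=
  forall Phi e, is_profile Phi -> models (B (nab Phi e)) = maxset (models (B e)) (a Phi).

End Space.

From mathcomp Require Import all_boot.
From Stdlib Require ClassicalEpsilon.
Set Implicit Arguments. Unset Strict Implicit. Unset Printing Implicit Defensive.

(* Everything reduces to the revealed preference of the operator: w is at
   least as plausible as w' for Phi iff w survives when Phi is combined with
   the belief whose models are exactly {w, w'}.  Such a belief exists because
   every nonempty set of valuations is definable.  (ESF1)-(ESF4) make the
   outcome of any combination the set of maximal models of the constraint for
   this relation; totality and transitivity then follow by restricting the
   constraint to pairs and triples, and (ESF5)-(ESF8W) translate clause by
   clause into quasifaithfulness.  Conversely, a representing assignment is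
   read off pairs in the same way, which also gives uniqueness. *)

Section DefinableSets.
Variable P : finType.

Lemma models_and (f g : form P) : models (FAnd f g) = models f :&: models g.
Proof. by apply/setP => w; rewrite !inE. Qed.

Lemma models_or (f g : form P) : models (FOr f g) = models f :|: models g.
Proof. by apply/setP => w; rewrite !inE. Qed.

Definition point_form (w : valuation P) : form P :=
  foldr (fun p acc => FAnd (if w p then FVar p else FNeg (FVar p)) acc) FTop (enum P).

Lemma sat_point_form (w v : valuation P) : sat v (point_form w) = (v == w).
Proof.
have sat_conj s : sat v (foldr (fun p acc =>
    FAnd (if w p then FVar p else FNeg (FVar p)) acc) FTop s) = all (fun p => v p == w p) s.
  elim: s => [|p s IH] //=; rewrite IH; congr (_ && _).
  by case: (w p) => /=; case: (v p).
rewrite /point_form sat_conj; apply/idP/eqP => [/allP vw|->]; last exact/allP.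
by apply/ffunP => p; apply/eqP/vw; rewrite mem_enum.
Qed.

Definition set_form (X : {set valuation P}) : form P :=
  foldr (fun w acc => FOr (point_form w) acc) FBot (enum X).

Lemma models_set_form (X : {set valuation P}) : models (set_form X) = X.
Proof.
have sat_disj v s : sat v (foldr (fun w acc => FOr (point_form w) acc) FBot s) = (v \in s).
  by elim: s => [|w s IH] //=; rewrite IH sat_point_form in_cons.
by apply/setP => v; rewrite inE /set_form sat_disj mem_enum.
Qed.

Lemma epistemic_space_models (E : Type) (B : E -> form P) :
  epistemic_space B -> forall X, exists e, X != set0 -> models (B e) = X.
Proof.
case=> [[e0] [_ hB]] X.
have [_|nzX] := eqVneq X set0; first by exists e0.
have /hB [e He] : consistent (set_form X) by rewrite /consistent models_set_form.
by exists e => _; rewrite He models_set_form.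
Qed.

End DefinableSets.

Section MaximalElements.
Variables (T : finType) (r : rel T).

Lemma in_maxset (C : {set T}) (c : T) :
  reflect (c \in C /\ forall x, x \in C -> r c x) (c \in maxset C r).
Proof.
rewrite inE; apply: (iffP andP) => [[cC /forall_inP cmax]|[cC cmax]]; split => //.
exact/forall_inP.
Qed.

Lemma maxset_sub (C : {set T}) : maxset C r \subset C.
Proof. by apply/subsetP => c /in_maxset[]. Qed.

Lemma eq_maxset (r' : rel T) (C : {set T}) : r =2 r' -> maxset C r = maxset C r'.
Proof.
by move=> rr'; apply/setP => c; rewrite !inE; under eq_forallb => x do rewrite rr'.
Qed.

Lemma mem_maxset2 w w' : r w w -> (w \in maxset [set w; w'] r) = r w w'.
Proof.
move=> rww; apply/in_maxset/idP => [[_ wmax]|rww']; first by rewrite wmax ?set22.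
by split=> [|x /set2P[]->]; rewrite ?set21.
Qed.

Lemma maxset_setI_sub (C D : {set T}) : maxset C r :&: D \subset maxset (C :&: D) r.
Proof.
apply/subsetP => c /setIP[/in_maxset[cC cmax] cD].
by apply/in_maxset; split=> [|x /setIP[xC _]]; [apply/setIP | apply: cmax].
Qed.

(* A maximal element d of C inside D witnesses that every maximal element of
   C :&: D is above all of C. *)
Lemma maxset_setI (C D : {set T}) : transitive r ->
  maxset C r :&: D != set0 -> maxset (C :&: D) r = maxset C r :&: D.
Proof.
move=> r_tr /set0Pn[d /setIP[/in_maxset[dC dmax] dD]].
apply/eqP; rewrite eqEsubset maxset_setI_sub andbT.
apply/subsetP => c /in_maxset[/setIP[cC cD] cmax].
rewrite inE cD andbT; apply/in_maxset; split=> // x xC.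
by apply: (r_tr d); [apply: cmax; apply/setIP | apply: dmax].
Qed.

Lemma maxset_strict (C : {set T}) d c : total r -> transitive r ->
  d \in maxset C r -> c \in C -> c \notin maxset C r -> strict r d c.
Proof.
move=> r_tot r_tr /in_maxset[_ dmax] cC.
rewrite inE cC /= => /forall_inPn[x xC ncx].
have rxc : r x c by move: (r_tot c x); rewrite (negbTE ncx).
rewrite /strict (r_tr x) ?dmax //=.
by apply/negP => rcd; case/negP: ncx; apply: r_tr rcd (dmax x xC).
Qed.

End MaximalElements.

Lemma maxset_pair_separates (T : finType) (r r' : rel T) : reflexive r -> reflexive r' ->
  ~ r =2 r' -> exists w w', maxset [set w; w'] r != maxset [set w; w'] r'.
Proof.
move=> r_refl r'_refl neq.
have [[w w'] /= rw] : exists ww : T * T, r ww.1 ww.2 != r' ww.1 ww.2.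
  apply/existsP; apply: contraT => /existsPn same; case: neq => w w'.
  by apply/eqP/negPn; apply: (same (w, w')).
exists w, w'; apply: contraNneq rw => eq_max.
by rewrite -(mem_maxset2 w' (r_refl w)) -(mem_maxset2 w' (r'_refl w)) eq_max.
Qed.

Section Combination.
Variables (T : finType) (r r1 r2 : rel T).

Lemma maxset_setI_combine (C : {set T}) :
  (forall w w', r1 w w' -> r2 w w' -> r w w') ->
  maxset C r1 :&: maxset C r2 \subset maxset C r.
Proof.
move=> comb; apply/subsetP => c /setIP[/in_maxset[cC c1] /in_maxset[_ c2]].
by apply/in_maxset; split=> // x xC; apply: comb; [apply: c1 | apply: c2].
Qed.

Lemma maxset_sub_setU (C : {set T}) :
  total r1 -> transitive r1 -> total r2 -> transitive r2 ->
  (forall w w', strict r1 w w' -> strict r2 w w' -> strict r w w') ->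
  maxset C r1 :&: maxset C r2 != set0 ->
  maxset C r \subset maxset C r1 :|: maxset C r2.
Proof.
move=> tot1 tr1 tot2 tr2 comb /set0Pn[d /setIP[d1 d2]].
apply/subsetP => c /in_maxset[cC cmax]; rewrite inE.
apply/negPn/negP; rewrite negb_or => /andP[n1 n2].
have /andP[_] := comb _ _ (maxset_strict tot1 tr1 d1 cC n1) (maxset_strict tot2 tr2 d2 cC n2).
by rewrite cmax // (subsetP (maxset_sub _ _) _ d1).
Qed.

End Combination.

Lemma part_profile (S E : Type) (lt : rel S) (Phi : profile S E) m :
  well_order lt -> is_profile lt Phi -> is_partition Phi m ->
  is_profile lt (part1 Phi m) /\ is_profile lt (part2 Phi m).
Proof.
case=> _ [lt_tr _] [Phi_sorted _] [_ [h1 h2]].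
have tr : transitive (fun a b : S * E => lt a.1 b.1) by move=> y x z; apply: lt_tr.
by split; split; rewrite ?/nilp -?lt0n //; apply: sorted_mask.
Qed.

Lemma single_profile (S E : Type) (lt : rel S) i (e : E) : is_profile lt (single i e).
Proof. by []. Qed.

Section Soundness.
Variables (P : finType) (S : Type) (lt : rel S) (E : Type) (B : E -> form P).
Variables (nab : profile S E -> E -> E) (a : assignment P S E).
Hypothesis qf : quasifaithful lt B a.
Hypothesis rep : represents lt B nab a.

Let a_total Phi : is_profile lt Phi -> total (a Phi).
Proof. by case: qf => [[asg _] _] /asg[]. Qed.

Let a_trans Phi : is_profile lt Phi -> transitive (a Phi).
Proof. by case: qf => [[asg _] _] /asg[]. Qed.

Let a_refl Phi : is_profile lt Phi -> reflexive (a Phi).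
Proof. by move=> /a_total tot w; have := tot w w; rewrite orbb. Qed.

Lemma represents_pair Phi e w w' : is_profile lt Phi ->
  models (B e) = [set w; w'] -> a Phi w w' = (w \in models (B (nab Phi e))).
Proof. by move=> hPhi He; rewrite rep // He mem_maxset2 // a_refl. Qed.

Lemma represents_ESF1 : ESF1 lt B nab.
Proof. by move=> Phi e hPhi; rewrite /entails rep // maxset_sub. Qed.

Lemma represents_ESF2 : ESF2 lt B nab.
Proof.
move=> Phi Phi' e e' hPhi hPhi' eqPhi eqe; rewrite /fequiv !rep // eqe.
by apply: eq_maxset; case: qf => [[_ bas] _]; apply: bas.
Qed.

Lemma represents_ESF3 : ESF3 lt B nab.
Proof.
move=> Phi e e' e'' hPhi; rewrite /fequiv /entails !models_and !rep // => ->.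
exact: maxset_setI_sub.
Qed.

Lemma represents_ESF4 : ESF4 lt B nab.
Proof.
move=> Phi e e' e'' hPhi; rewrite /fequiv /consistent /entails !models_and !rep // => -> ne.
by rewrite maxset_setI //; apply: a_trans.
Qed.

Lemma represents_ESF5 : epistemic_space B -> ESF5 B nab.
Proof.
move=> hE j k ej ek ne.
have [|w [w' sep]] := maxset_pair_separates (a_refl (single_profile lt j ej))
  (a_refl (single_profile lt k ek)).
  by case: qf => _ [qf1 _]; apply: qf1.
have [e' He'] := epistemic_space_models hE [set w; w'].
exists e'; rewrite /fequiv !rep // He' //; first exact/eqP.
by apply/set0Pn; exists w; rewrite set21.
Qed.

Lemma represents_ESF6 : ESF6 lt B nab.
Proof.
move=> Phi e hPhi; rewrite /consistent /fequiv models_and rep // => cons_e.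
have cons_Phi : consistent (bigB B Phi).
  by apply: contraNneq cons_e => Phi0; rewrite Phi0 set0I.
case: qf => _ [_ [qf2 _]]; rewrite qf2 // in cons_e *.
by rewrite -maxset_setI ?setTI //; apply: a_trans.
Qed.

Lemma represents_ESF7 : well_order lt -> ESF7 lt B nab.
Proof.
move=> hS Phi e m hPhi hm; have [h1 h2] := part_profile hS hPhi hm.
rewrite /entails models_and !rep //; apply: maxset_setI_combine => w w'.
by case: qf => _ [_ [_ [qf3 _]]]; apply: qf3.
Qed.

Lemma represents_ESF8W : well_order lt -> ESF8W lt B nab.
Proof.
move=> hS Phi e m hPhi hm; have [h1 h2] := part_profile hS hPhi hm.
rewrite /consistent /entails models_and models_or !rep //.
apply: maxset_sub_setU; try by [apply: a_total | apply: a_trans].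
by case: qf => _ [_ [_ [_ qf4]]] w w'; apply: qf4.
Qed.

Lemma represents_ESF_all : well_order lt -> epistemic_space B -> ESF_all lt B nab.
Proof.
move=> hS hE; do !split; by [apply: represents_ESF1 | apply: represents_ESF2 |
  apply: represents_ESF3 | apply: represents_ESF4 | apply: represents_ESF5 |
  apply: represents_ESF6 | apply: represents_ESF7 | apply: represents_ESF8W].
Qed.

End Soundness.

Section Completeness.
Variables (P : finType) (S : Type) (lt : rel S) (E : Type) (B : E -> form P).
Variable nab : profile S E -> E -> E.
Hypothesis hE : epistemic_space B.

(* For X = set0 this is an arbitrary belief. *)
Definition belief_of (X : {set valuation P}) : E :=
  proj1_sig (ClassicalEpsilon.constructive_indefinite_description _
    (epistemic_space_models hE X)).

Lemma models_belief_of X : X != set0 -> models (B (belief_of X)) = X.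
Proof.
exact: proj2_sig (ClassicalEpsilon.constructive_indefinite_description _
  (epistemic_space_models hE X)).
Qed.

Lemma models_belief_of2 w w' : models (B (belief_of [set w; w'])) = [set w; w'].
Proof. by apply: models_belief_of; apply/set0Pn; exists w; rewrite set21. Qed.

Definition outcome Phi e := models (B (nab Phi e)).

Definition revealed : assignment P S E :=
  fun Phi w w' => w \in outcome Phi (belief_of [set w; w']).

Lemma outcome_neq0 Phi e : outcome Phi e != set0.
Proof. by case: hE => _ [consB _]; apply: consB. Qed.

Hypotheses (f1 : ESF1 lt B nab) (f2 : ESF2 lt B nab).
Hypotheses (f3 : ESF3 lt B nab) (f4 : ESF4 lt B nab).

Lemma outcome_sub Phi e : is_profile lt Phi -> outcome Phi e \subset models (B e).
Proof. exact: f1. Qed.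

Lemma outcome_restrict Phi e e' : is_profile lt Phi ->
  models (B e') \subset models (B e) -> outcome Phi e :&: models (B e') != set0 ->
  outcome Phi e' = outcome Phi e :&: models (B e').
Proof.
move=> hPhi sub_e' ne.
have eqe' : fequiv (B e') (FAnd (B e) (B e')).
  by rewrite /fequiv models_and; apply/esym/setIidPr.
apply/eqP; rewrite eqEsubset -models_and f3 // andbT.
by apply: f4; rewrite /consistent ?models_and.
Qed.

Lemma revealed_pair Phi e w w' : is_profile lt Phi ->
  models (B e) = [set w; w'] -> revealed Phi w w' = (w \in outcome Phi e).
Proof.
move=> hPhi He; rewrite /revealed /outcome (f2 (e' := e) hPhi hPhi) //.
by rewrite /fequiv models_belief_of2 He.
Qed.

(* Restricting the constraint of e to {c, d} keeps d, hence keeps c if c is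
   revealed at least as plausible as d. *)
Lemma outcome_upward Phi e c d : is_profile lt Phi ->
  d \in outcome Phi e -> c \in models (B e) -> revealed Phi c d -> c \in outcome Phi e.
Proof.
move=> hPhi d_out c_e; rewrite /revealed (@outcome_restrict Phi e _ hPhi) ?models_belief_of2.
- by case/setIP.
- apply/subsetP => x /set2P[]->; first exact: c_e.
  exact: subsetP (outcome_sub _ hPhi) _ d_out.
- by apply/set0Pn; exists d; rewrite inE d_out set22.
Qed.

Lemma outcome_maxset Phi e : is_profile lt Phi ->
  outcome Phi e = maxset (models (B e)) (revealed Phi).
Proof.
move=> hPhi; apply/setP => c; apply/idP/in_maxset => [c_out|[c_e cmax]].
  have c_e := subsetP (outcome_sub _ hPhi) _ c_out; split=> // x x_e.
  rewrite /revealed (@outcome_restrict Phi e _ hPhi) ?models_belief_of2.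
  - by rewrite inE c_out set21.
  - by apply/subsetP => y /set2P[]->.
  - by apply/set0Pn; exists c; rewrite inE c_out set21.
have /set0Pn[d d_out] := outcome_neq0 Phi e.
apply: (outcome_upward hPhi d_out c_e); apply: cmax.
exact: subsetP (outcome_sub _ hPhi) _ d_out.
Qed.

Lemma revealed_total Phi : is_profile lt Phi -> total (revealed Phi).
Proof.
move=> hPhi c x; have /set0Pn[d d_out] := outcome_neq0 Phi (belief_of [set c; x]).
have := subsetP (outcome_sub _ hPhi) _ d_out.
rewrite models_belief_of2 => /set2P[] d_eq; rewrite d_eq in d_out.
  by rewrite /revealed d_out.
rewrite (@revealed_pair Phi (belief_of [set c; x]) x c hPhi) ?d_out ?orbT //.
by rewrite models_belief_of2 setUC.
Qed.

(* Combine with the constraint {w1, w2, w3}: whichever of them survives,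
   upward closure makes w1 survive, and survivors are maximal. *)
Lemma revealed_trans Phi : is_profile lt Phi -> transitive (revealed Phi).
Proof.
move=> hPhi w2 w1 w3 r12 r23; set e := belief_of [set w1; w2; w3].
have He : models (B e) = [set w1; w2; w3].
  by apply: models_belief_of; apply/set0Pn; exists w1; rewrite !inE eqxx.
have w2_up : w2 \in outcome Phi e -> w1 \in outcome Phi e.
  by move=> w2_out; apply: (outcome_upward hPhi w2_out); rewrite ?He ?inE ?eqxx.
have w1_out : w1 \in outcome Phi e.
  have /set0Pn[d d_out] := outcome_neq0 Phi e.
  have d_e := subsetP (outcome_sub _ hPhi) _ d_out; rewrite He !inE in d_e.
  case/orP: d_e => [/orP[]|] /eqP d_eq; rewrite d_eq in d_out.
  - exact: d_out.
  - exact: w2_up d_out.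
  - by apply/w2_up/(outcome_upward hPhi d_out); rewrite ?He ?inE ?eqxx ?orbT.
move: w1_out; rewrite outcome_maxset // => /in_maxset[_]; apply.
by rewrite He !inE eqxx !orbT.
Qed.

Lemma revealed_assignment : is_assignment lt revealed.
Proof. by move=> Phi hPhi; split; [apply: revealed_total | apply: revealed_trans]. Qed.

Lemma revealed_basic : basic lt revealed.
Proof.
split; first exact: revealed_assignment.
move=> Phi Psi hPhi hPsi eqPhi w w'; set e := belief_of [set w; w'].
by rewrite /revealed /outcome (f2 (e := e) (e' := e) hPhi hPsi eqPhi).
Qed.

Lemma revealed_represents : represents lt B nab revealed.
Proof. exact: outcome_maxset. Qed.

Lemma revealed_separates_singles : ESF5 B nab ->
  forall j k (ej ek : E), ej <> ek -> ~ revealed (single j ej) =2 revealed (single k ek).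
Proof.
move=> f5 j k ej ek ne same; have [e' He'] := f5 j k ej ek ne; apply: He'.
rewrite /fequiv -!/(outcome _ _) !outcome_maxset //.
exact: eq_maxset.
Qed.

Lemma revealed_max_profile : ESF6 lt B nab -> forall Phi, is_profile lt Phi ->
  consistent (bigB B Phi) -> models (bigB B Phi) = maxset [set: valuation P] (revealed Phi).
Proof.
move=> f6 Phi hPhi cons_Phi.
have HT : models (B (belief_of [set: valuation P])) = [set: valuation P].
  by apply: models_belief_of; apply/set0Pn; exists [ffun=> true].
rewrite -HT -outcome_maxset // /outcome f6 //.
  by rewrite models_and HT setIT.
by rewrite /consistent models_and HT setIT.
Qed.

Lemma revealed_part : ESF7 lt B nab -> forall Phi m w w',
  is_profile lt Phi -> is_partition Phi m ->
  revealed (part1 Phi m) w w' -> revealed (part2 Phi m) w w' -> revealed Phi w w'.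
Proof.
move=> f7 Phi m w w' hPhi hm r1 r2.
by apply: (subsetP (f7 _ _ _ hPhi hm)); rewrite models_and; apply/setIP.
Qed.

(* With e the belief {w, w'}, strictness of w over w' means that w' does not
   survive; (ESF8W) forbids w' to survive for Phi when it survives for
   neither part. *)
Lemma revealed_part_strict : well_order lt -> ESF7 lt B nab -> ESF8W lt B nab ->
  forall Phi m w w', is_profile lt Phi -> is_partition Phi m ->
  strict (revealed (part1 Phi m)) w w' -> strict (revealed (part2 Phi m)) w w' ->
  strict (revealed Phi) w w'.
Proof.
move=> hS f7 f8 Phi m w w' hPhi hm /andP[r1 n1] /andP[r2 n2].
have [h1 h2] := part_profile hS hPhi hm.
rewrite /strict (revealed_part f7 hPhi hm r1 r2) /=.
set e := belief_of [set w; w'].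
have He : models (B e) = [set w'; w] by rewrite models_belief_of2 setUC.
rewrite !(revealed_pair _ He) // in n1 n2 *.
apply: contraNN n1 => w'_out.
have : w' \in outcome (part1 Phi m) e :|: outcome (part2 Phi m) e.
  rewrite /outcome -models_or; apply: (subsetP (f8 _ _ _ hPhi hm _)) => //.
  by rewrite /consistent models_and; apply/set0Pn; exists w; apply/setIP.
by rewrite inE (negbTE n2) orbF.
Qed.

Lemma revealed_quasifaithful : well_order lt -> ESF5 B nab -> ESF6 lt B nab ->
  ESF7 lt B nab -> ESF8W lt B nab -> quasifaithful lt B revealed.
Proof.
move=> hS f5 f6 f7 f8; split; first exact: revealed_basic.
split; first exact: revealed_separates_singles.
split; first exact: revealed_max_profile.
by split; [apply: revealed_part | apply: revealed_part_strict].
Qed.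

End Completeness.

Theorem theorem3 (P : finType) (S : Type) (lt : rel S) (E : Type) (B : E -> form P)
  (hS : well_order lt) (hE : epistemic_space B)
  (nab : profile S E -> E -> E) :
  ESF_all lt B nab <->
  exists a : assignment P S E,
    (quasifaithful lt B a /\ represents lt B nab a) /\
    (forall a' : assignment P S E, quasifaithful lt B a' -> represents lt B nab a' ->
       forall Phi, is_profile lt Phi -> a' Phi =2 a Phi).
Proof.
split=> [hESF|[a [[qf rep] _]]]; last exact: represents_ESF_all qf rep hS hE.
have [f1 [f2 [f3 [f4 [f5 [f6 [f7 f8]]]]]]] := hESF.
exists (revealed nab hE); split.
  by split; [apply: revealed_quasifaithful | apply: revealed_represents].
move=> a' qf' rep' Phi hPhi w w'.
by rewrite (represents_pair qf' rep' hPhi (models_belief_of2 hE w w')).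
Qed.
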